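(* Let $N\ge 1$, let $q$ be an indeterminate and $z_1,\dots,z_N$ indeterminates, and put $\delta=(N-1,N-2,\dots,0)$. Then $$\prod_{1\le i<j\le N}(z_i-q^{-2}z_j)=\sum_{w\in S_N}(-q^{-2})^{\ell(w)}z^{w(\delta)}+\sum_{\gamma}a_{\gamma}\,z_1^{\gamma_1}z_2^{\gamma_2}\cdots z_N^{\gamma_N},$$ where the second sum is finite, and for each monomial $z_1^{\gamma_1}\cdots z_N^{\gamma_N}$ occurring in it there exist $i\neq j$ with $\gamma_i=\gamma_j$, and its coefficient satisfies $a_\gamma\in\mathbb{Z}[q^{-2}]$ and $a_\gamma(1)=0$ (i.e. $a_\gamma$ vanishes at $q^{-2}=1$).
   Context: $S_N$ is the symmetric group on $\{1,\dots,N\}$ and $\ell(w)$ is the number of inversions of $w$, i.e. the number of pairs $i<j$ with $w(i)>w(j)$. For $w\in S_N$, $z^{w(\delta)}$ denotes the monomial $\prod_{i=1}^N z_{w(i)}^{\,N-i}$. *)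

From HB Require Import structures.
From mathcomp Require Import all_boot all_order all_algebra all_fingroup.
From mathcomp Require Import mpoly.
Set Implicit Arguments. Unset Strict Implicit. Unset Printing Implicit Defensive.
Import GRing.Theory.
Local Open Scope ring_scope.

Definition ell (N : nat) (w : 'S_N) : nat :=
  #|[set p : 'I_N * 'I_N | (p.1 < p.2)%N && (w p.2 < w p.1)%N]|.

(* Coefficient ring Z[t], t := q^{-2}; polynomials in z_0..z_{N-1}. *)
Notation coefR := {poly int}.

Definition lhsP (N : nat) : {mpoly coefR[N]} :=
  \prod_(i < N) \prod_(j < N | (i < j)%N) ('X_i - (polyX int) *: 'X_j).

(* z^{w(delta)} = prod_i z_{w(i)}^{N-1-i} (0-indexed) *)
Definition zwdelta (N : nat) (w : 'S_N) : {mpoly coefR[N]} :=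
  \prod_(i < N) 'X_(w i) ^+ (N - 1 - i)%N.

Definition mainSum (N : nat) : {mpoly coefR[N]} :=
  \sum_(w : 'S_N) ((- polyX int) ^+ ell w) *: zwdelta w.

From HB Require Import structures.
From mathcomp Require Import all_boot all_order all_algebra all_fingroup.
From mathcomp Require Import mpoly.
From mathcomp Require Import zify.
Set Implicit Arguments. Unset Strict Implicit. Unset Printing Implicit Defensive.
Import GRing.Theory.
Local Open Scope ring_scope.

(* Expand the product over tournaments: one choice of [z_i] or [- t z_j] ([t = q^-2]) in each
   factor [i < j]. Pairing an exponent vector [m] with the score vector [s] of a
   tournament gives [sum_k m_k s_k = sum_(i<j) m_winner <= sum_(i<j) max(m_i, m_j)
   = sum_k m_k rank_k], and [rank_k <= m_k] when the [m_k] are distinct. So if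
   [s = m] has distinct entries, equality holds throughout: every pair is won by its
   larger exponent and [m_k = rank_k], i.e. [m = w(delta)], with coefficient
   [(- t) ^ ell w]. The remainder thus only has monomials with a repeated exponent;
   at [t = 1] the product is, up to sign, the Vandermonde determinant, whose
   monomials all have distinct exponents, so their coefficients vanish there. *)

Lemma perm_mnm_sumE n (s : 'S_n) (g : 'I_n -> nat) k :
  (\sum_i U_(s i) *+ g i)%MM k = g (s^-1 k)%g.
Proof.
rewrite mnm_sumE (bigD1 (s^-1 k)%g) //= mulmnE mnm1E permKV eqxx mul1n.
rewrite big1 ?addn0 // => i ik; rewrite mulmnE mnm1E.
by case: eqP => // si_k; case/eqP: ik; rewrite -si_k permK.
Qed.

Lemma perm_mnm_sum_inj n (s : 'S_n) (g : 'I_n -> nat) :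
  injective g -> injective (\sum_i U_(s i) *+ g i)%MM.
Proof. by move=> g_inj x y; rewrite !perm_mnm_sumE => /g_inj /perm_inj. Qed.

Lemma weighted_sum_mnm1 n (I : finType) (P : pred I) (F : I -> 'I_n)
    (g : 'I_n -> nat) :
  (\sum_k g k * (\sum_(i | P i) U_(F i))%MM k = \sum_(i | P i) g (F i))%N.
Proof.
under eq_bigr do rewrite mnm_sumE big_distrr.
rewrite exchange_big; apply: eq_bigr => i _ /=.
rewrite (bigD1 (F i)) //= mnm1E eqxx muln1 big1 ?addn0 // => k.
by rewrite mnm1E eq_sym => /negbTE ->; rewrite muln0.
Qed.

Lemma card_ord_ltn n c : (c <= n)%N -> #|[set i : 'I_n | (i < c)%N]| = c.
Proof.
move=> le_cn; rewrite -sum1dep_card -(big_ord_widen _ (fun _ => 1%N) le_cn).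
by rewrite sum1_card card_ord.
Qed.

Lemma sum_ltn_pair_swap n (h : 'I_n * 'I_n -> nat) : (forall i, h (i, i) = 0%N) ->
  (\sum_(p : 'I_n * 'I_n | (p.1 < p.2)%N) (h p + h (p.2, p.1)) = \sum_p h p)%N.
Proof.
move=> h_diag.
have swap_inj : injective (fun p : 'I_n * 'I_n => (p.2, p.1)) by move=> [? ?] [? ?] [-> ->].
rewrite big_split /= [X in (_ + X)%N](reindex_inj swap_inj) /=.
rewrite [RHS](bigID (fun p : 'I_n * 'I_n => (p.1 < p.2)%N)) /=; congr (_ + _)%N.
rewrite [RHS](bigID (fun p : 'I_n * 'I_n => (p.2 < p.1)%N)) /= [X in (_ + X)%N]big1 ?addn0.
  by apply: eq_big => [p | [i j] _ //]; case: ltngtP.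
move=> [i j] /=; rewrite -!leqNgt => /andP[ji ij].
by have /val_inj -> : (i : nat) = j by apply/eqP; rewrite eqn_leq ij ji.
Qed.

Section PermutedStaircase.
Variable n : nat.

Definition wdelta (w : 'S_n) : 'X_{1..n} := (\sum_i U_(w i) *+ (n - 1 - i))%MM.

Lemma wdeltaE w k : wdelta w k = (n - 1 - (w^-1)%g k)%N.
Proof. exact: perm_mnm_sumE. Qed.

Lemma wdelta_lt w k : (wdelta w k < n)%N.
Proof. by rewrite wdeltaE; have := ltn_ord k; lia. Qed.

Lemma revn_ord_inj : injective (fun i : 'I_n => (n - 1 - i)%N).
Proof.
by move=> i j /= eq_ij; apply: ord_inj; have := ltn_ord i; have := ltn_ord j; lia.
Qed.

Lemma wdelta_injective w : injective (wdelta w).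
Proof. exact: perm_mnm_sum_inj revn_ord_inj. Qed.

Lemma wdelta_inj : injective wdelta.
Proof.
move=> w1 w2 eq_w; apply: invg_inj; apply/permP => k; apply: revn_ord_inj.
by rewrite /= -!wdeltaE eq_w.
Qed.

Lemma wdelta_surj (m : 'X_{1..n}) :
  injective m -> (forall k, m k < n)%N -> exists w, wdelta w = m.
Proof.
move=> m_inj m_lt.
have v_lt k : (n - 1 - m k < n)%N by have := m_lt k; lia.
have v_inj : injective (fun k => Ordinal (v_lt k)).
  by move=> i j /(congr1 val) /= eq_ij; apply: m_inj; have := m_lt i; have := m_lt j; lia.
exists (perm v_inj)^-1%g; apply/mnmP => k; rewrite wdeltaE invgK permE /=.
by have := m_lt k; lia.
Qed.

Lemma card_wdelta_ascents w :
  #|[set p : 'I_n * 'I_n | (p.1 < p.2)%N && (wdelta w p.1 < wdelta w p.2)%N]| = ell w.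
Proof.
pose psi (p : 'I_n * 'I_n) := (w p.2, w p.1).
have psi_inj : injective psi by move=> [i j] [k l] [/perm_inj -> /perm_inj ->].
rewrite /ell -(card_preimset _ psi_inj); apply: eq_card => -[i j].
rewrite !inE /= !wdeltaE !permK andbC; congr (_ && _).
by have := ltn_ord i; have := ltn_ord j; lia.
Qed.

End PermutedStaircase.

Section QVandermonde.
Variables (R : comNzRingType) (n : nat) (a : R).

Definition q_vandermonde : {mpoly R[n]} :=
  \prod_(i < n) \prod_(j < n | (i < j)%N) ('X_i - a *: 'X_j).

Definition q_staircase : {mpoly R[n]} :=
  \sum_(w : 'S_n) (- a) ^+ ell w *: 'X_[wdelta w].

Lemma q_staircase_coef m : q_staircase@_m = \sum_w (- a) ^+ ell w * (wdelta w == m)%:R.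
Proof. by rewrite raddf_sum; apply: eq_bigr => w _ /=; rewrite mcoeffZ mcoeffX. Qed.

Lemma q_staircase_coef_noninj (m : 'X_{1..n}) : ~ injective m -> q_staircase@_m = 0.
Proof.
move=> m_ninj; rewrite q_staircase_coef big1 // => w _.
have [wm | _] := eqVneq (wdelta w) m; last by rewrite mulr0.
by case: m_ninj; rewrite -wm; apply: wdelta_injective.
Qed.

Local Notation tournament := {ffun 'I_n * 'I_n -> bool}.

(* A tournament [f] takes [z_i] from the factor [z_i - a z_j] of the pair [p = (i, j)],
   [i < j], when [f p], and [- a z_j] otherwise. There is no factor for [i >= j]: the
   weight [(f p)%:R] kills every tournament that is not [true] there. *)
Definition winner (f : tournament) p : 'I_n := if f p then p.1 else p.2.

Definition tcoef (f : tournament) : R :=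
  \prod_(p : 'I_n * 'I_n) (if (p.1 < p.2)%N then (if f p then 1 else - a) else (f p)%:R).

Definition tmnm (f : tournament) : 'X_{1..n} :=
  (\sum_(p : 'I_n * 'I_n | (p.1 < p.2)%N) U_(winner f p))%MM.

Lemma q_vandermonde_tournaments :
  q_vandermonde = \sum_(f : tournament) tcoef f *: 'X_[tmnm f].
Proof.
rewrite /q_vandermonde pair_big_dep /= big_mkcond /=.
transitivity (\prod_(p : 'I_n * 'I_n) \sum_(b : bool)
   (if (p.1 < p.2)%N then (if b then 1 else - a) else b%:R) *:
   'X_[(if (p.1 < p.2)%N then U_(if b then p.1 else p.2) else 0)%MM]).
  apply: eq_bigr => p _; rewrite big_bool; case: ifP => _ /=.
    by rewrite scale1r scaleNr.
  by rewrite scale1r scale0r addr0 mpolyX0.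
rewrite bigA_distr_bigA; apply: eq_bigr => f _.
by rewrite scaler_prod mprodXE /tmnm [in RHS]big_mkcond.
Qed.

Lemma q_vandermonde_coef m :
  q_vandermonde@_m = \sum_(f : tournament) tcoef f * (tmnm f == m)%:R.
Proof.
rewrite q_vandermonde_tournaments raddf_sum; apply: eq_bigr => f _ /=.
by rewrite mcoeffZ mcoeffX.
Qed.

Lemma tcoef_neq0 f (p : 'I_n * 'I_n) : tcoef f != 0 -> ~~ (p.1 < p.2)%N -> f p.
Proof.
move=> + p_ge; apply: contraNT => /negbTE fpF.
by rewrite /tcoef (bigD1 p) //= (negbTE p_ge) fpF mul0r.
Qed.

Section InjectiveExponent.
Variable m : 'X_{1..n}.
Hypothesis m_inj : injective m.

Definition mrank k := #|[set j | (m j < m k)%N]|.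

Definition mtour : tournament :=
  [ffun p : 'I_n * 'I_n => (p.1 < p.2)%N ==> (m p.2 < m p.1)%N].

Lemma mrank_le k : (mrank k <= m k)%N.
Proof.
rewrite /mrank cardE -(size_map m) -[leqRHS](size_iota 0).
apply: uniq_leq_size; first by rewrite map_inj_uniq ?enum_uniq.
by move=> x /mapP[j]; rewrite mem_enum inE => lt_jk ->; rewrite mem_iota.
Qed.

Lemma mrank_lt k : (mrank k < n)%N.
Proof.
rewrite /mrank -[X in (_ < X)%N]card_ord -cardsT; apply: proper_card; apply/properP.
by split; [apply: subsetT | exists k; rewrite !inE ?ltnn].
Qed.

Lemma mrank_id : (forall k, m k < n)%N -> forall k, mrank k = m k.
Proof.
move=> m_lt k; pose pi j := Ordinal (m_lt j).
have pi_inj : injective pi by move=> i j /(congr1 val) /m_inj.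
rewrite /mrank -[RHS](card_ord_ltn (ltnW (m_lt k))).
rewrite -(card_preimset [set i : 'I_n | (i < m k)%N] pi_inj).
by apply: eq_card => j; rewrite !inE.
Qed.

Lemma tmnm_mtour k : tmnm mtour k = mrank k.
Proof.
pose beats (p : 'I_n * 'I_n) : nat := (p.1 == k) && (m p.2 < m p.1)%N.
transitivity (\sum_(p : 'I_n * 'I_n | (p.1 < p.2)%N) (beats p + beats (p.2, p.1)))%N.
  rewrite /tmnm mnm_sumE; apply: eq_bigr => -[i j] /= lt_ij.
  rewrite mnm1E /winner ffunE lt_ij /beats /=.
  case: (ltngtP (m j) (m i)) => [_ | _ | /m_inj eq_ji]; rewrite ?andbT ?andbF ?addn0 //.
  by rewrite eq_ji ltnn in lt_ij.
rewrite sum_ltn_pair_swap => [|i]; last by rewrite /beats ltnn andbF.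
rewrite -(pair_bigA _ (fun i j => beats (i, j))) (bigD1 k) //=.
rewrite [X in (_ + X)%N]big1 ?addn0 => [|i ik]; last first.
  by rewrite big1 // => j _; rewrite /beats /= (negbTE ik).
rewrite /mrank -sum1dep_card [RHS]big_mkcond.
by apply: eq_bigr => j _; rewrite /beats /= eqxx.
Qed.

Lemma mtour_unique f : tcoef f != 0 -> tmnm f = m -> f = mtour.
Proof.
move=> f_neq0 f_m.
have le_win (p : 'I_n * 'I_n) : (p.1 < p.2)%N -> (m (winner f p) <= m (winner mtour p))%N.
  move=> lt_p; rewrite /winner ffunE lt_p /=.
  by case: (f p); case: ltnP => // /ltnW.
have weight_f :
    (\sum_(p : 'I_n * 'I_n | (p.1 < p.2)%N) m (winner f p) = \sum_k m k * m k)%N.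
  by rewrite -weighted_sum_mnm1 -/(tmnm f) f_m.
have weight_mtour :
    (\sum_(p : 'I_n * 'I_n | (p.1 < p.2)%N) m (winner mtour p) <= \sum_k m k * m k)%N.
  rewrite -weighted_sum_mnm1 -/(tmnm mtour); apply: leq_sum => k _.
  by rewrite tmnm_mtour leq_mul2l mrank_le orbT.
have win_leqif := leqif_sum (fun p lt_p => leqif_eq (le_win p lt_p)).
have /forall_inP win_eq :
    [forall (p : 'I_n * 'I_n | (p.1 < p.2)%N), m (winner f p) == m (winner mtour p)].
  by rewrite -win_leqif.2 eqn_leq win_leqif.1 weight_f weight_mtour.
apply/ffunP => p; case: (boolP (p.1 < p.2)%N) => lt_p; last first.
  by rewrite ffunE (negbTE lt_p) (tcoef_neq0 f_neq0).
move: (win_eq p lt_p) => /eqP /m_inj; rewrite /winner.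
by case: (f p) (mtour p) => -[] // eq_p; rewrite eq_p ltnn in lt_p.
Qed.

Lemma tcoef_mtour :
  tcoef mtour = (- a) ^+ #|[set p : 'I_n * 'I_n | (p.1 < p.2)%N && (m p.1 < m p.2)%N]|.
Proof.
rewrite /tcoef -prodr_const [RHS]big_mkcond /=; apply: eq_bigr => p _.
rewrite ffunE inE; case: (boolP (p.1 < p.2)%N) => lt_p //=.
case: (ltngtP (m p.1) (m p.2)) => // /m_inj eq_p.
by rewrite eq_p ltnn in lt_p.
Qed.

Lemma q_vandermonde_coef_mtour : q_vandermonde@_m = tcoef mtour * (tmnm mtour == m)%:R.
Proof.
rewrite q_vandermonde_coef (bigD1 mtour) //= big1 ?addr0 // => f f_ne.
have [f0 | f_neq0] := eqVneq (tcoef f) 0; first by rewrite f0 mul0r.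
have [f_m | _] := eqVneq (tmnm f) m; last by rewrite mulr0.
by case/eqP: f_ne; apply: mtour_unique.
Qed.

End InjectiveExponent.

Lemma q_vandermonde_coef_inj (m : 'X_{1..n}) :
  injective m -> q_vandermonde@_m = q_staircase@_m.
Proof.
move=> m_inj; rewrite q_vandermonde_coef_mtour // q_staircase_coef.
case: (pickP (fun w => wdelta w == m)) => [w /eqP wm | no_w].
  rewrite (bigD1 w) //= wm eqxx mulr1 big1 ?addr0 => [|v]; last first.
    by rewrite -wm (inj_eq (@wdelta_inj n)) => /negbTE ->; rewrite mulr0.
  have mtour_m : tmnm (mtour m) = m.
    apply/mnmP => k; rewrite tmnm_mtour // mrank_id // => j.
    by rewrite -wm wdelta_lt.
  by rewrite mtour_m eqxx mulr1 tcoef_mtour // -wm card_wdelta_ascents.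
rewrite big1 => [|w _]; last by rewrite no_w mulr0.
have [mtour_m | _] := eqVneq (tmnm (mtour m)) m; last by rewrite mulr0.
have [w wm] : exists w, wdelta w = m.
  by apply: wdelta_surj => // k; rewrite -mtour_m tmnm_mtour // mrank_lt.
by have := no_w w; rewrite wm eqxx.
Qed.

End QVandermonde.

Lemma map_q_vandermonde (R S : comNzRingType) (f : {rmorphism R -> S}) n (a : R) :
  map_mpoly f (q_vandermonde n a) = q_vandermonde n (f a).
Proof.
rewrite /q_vandermonde rmorph_prod; apply: eq_bigr => i _.
rewrite rmorph_prod; apply: eq_bigr => j _.
by rewrite rmorphB /= map_mpolyZ !map_mpolyX.
Qed.

Lemma q_vandermonde1_coef_noninj (R : comNzRingType) n (m : 'X_{1..n}) :
  ~ injective m -> (q_vandermonde n (1 : R))@_m = 0.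
Proof.
move=> m_ninj.
have -> : q_vandermonde n (1 : R) =
    (\prod_(i < n) \prod_(j < n | (i < j)%N) (-1)) *: \det (Vandermonde n (\row_j 'X_j)).
  rewrite det_Vandermonde -scaler_prod; apply: eq_bigr => i _.
  rewrite -scaler_prod; apply: eq_bigr => j _.
  by rewrite !mxE scale1r scaleN1r opprB.
rewrite mcoeffZ [\det _]/determinant raddf_sum [X in _ * X]big1 ?mulr0 // => s _ /=.
rewrite (eq_bigr (fun i => 'X_(s i) ^+ i)) => [|i _]; last by rewrite !mxE.
have s_ne_m : (\sum_i U_(s i) *+ i)%MM != m.
  by apply/eqP => s_m; apply: m_ninj; rewrite -s_m; apply: perm_mnm_sum_inj (@ord_inj n).
rewrite mprodXnE mulr_sign.
by case: ifP => _; rewrite ?mcoeffN mcoeffX (negbTE s_ne_m) ?oppr0.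
Qed.

Theorem mainTheorem1 (N : nat) (hN : (0 < N)%N) :
  exists R : {mpoly {poly int}[N]},
    lhsP N = mainSum N + R /\
    forall m : 'X_{1..N}, m \in msupp R ->
      (exists i j : 'I_N, i != j /\ m i = m j) /\ (R@_m).[1] = 0.
Proof.
have lhsPE : lhsP N = q_vandermonde N 'X by [].
have mainSumE : mainSum N = q_staircase N 'X.
  by apply: eq_bigr => w _; rewrite /zwdelta mprodXnE.
exists (lhsP N - mainSum N); split; first by rewrite addrC subrK.
move=> m; rewrite mcoeff_msupp mcoeffB lhsPE mainSumE.
have [/injectiveP m_inj | /injectivePn[i [j ij mij]]] := boolP (injectiveb m).
  by rewrite q_vandermonde_coef_inj // subrr eqxx.
have m_ninj : ~ injective m by move/(_ i j mij)/eqP; rewrite (negbTE ij).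
move=> _; split; first by exists i, j.
rewrite q_staircase_coef_noninj // subr0 -[_.[1]]/(horner_eval 1 _).
rewrite -mcoeff_map_mpoly map_q_vandermonde /= horner_evalE hornerX.
exact: q_vandermonde1_coef_noninj.
Qed.
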